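(* Let $A\in\{0,1\}$ be a binary exposure and $M_1,\dots,M_K$ binary mediators ($K\ge 1$) whose causal dependencies among themselves form an arbitrary directed acyclic graph $G$. For each mediator $M_k$ and each $a\in\{0,1\}$ let $M_k(a)\in\{0,1\}$ denote its potential value, defined recursively by $M_k(a)=M_k\big(a,\mathrm{Pa}\{M_k\}(a)\big)$, where $\mathrm{Pa}\{M_k\}(a)=\{M_j(a)\}_{j\in \text{parents of }M_k\text{ in }G}$ (if $M_k$ has no parent mediator this is simply $M_k(a)$). Let $Y(a,m_1,\dots,m_K)$ denote the potential outcome (real-valued) when $A$ is set to $a$ and the mediators are set to $m_1,\dots,m_K$, and write $Y(a)=Y\big(a,M_1(a),\dots,M_K(a)\big)$. Define the total effect $\mathrm{TE}=Y(1)-Y(0)$ and, for $k=1,\dots,K$, $a,m\in\{0,1\}$, $$Y_k(a,m)=Y\big(a,M_1(a),\dots,M_{k-1}(a),m,M_{k+1}(a),\dots,M_K(a)\big),$$ $$\mathrm{CDE}_k(0)=Y_k(1,0)-Y_k(0,0),\qquad \mathrm{CIE}_k(a)=Y_k(a,1)-Y_k(a,0),$$ $$\mathrm{sCIE}_k=M_k(1)\,\mathrm{CIE}_k(1)-M_k(0)\,\mathrm{CIE}_k(0).$$ Then for every $k=1,\dots,K$, $$\mathrm{TE}=\mathrm{CDE}_k(0)+\mathrm{sCIE}_k .$$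
   Context: Potential-outcomes (counterfactual) framework for mediation analysis with binary exposure and binary mediators. $\mathrm{CDE}_k(0)$ is called the controlled direct effect for the $k$-th mediator, $\mathrm{CIE}_k(a)$ the controlled indirect effect, and $\mathrm{sCIE}_k$ the scaled controlled indirect effect. *)

From mathcomp Require Import all_boot all_order all_algebra.
Set Implicit Arguments. Unset Strict Implicit. Unset Printing Implicit Defensive.
Import Order.TTheory GRing.Theory Num.Theory.
Local Open Scope ring_scope.

(* G, given by par j k = "M_j is a parent of M_k", is a DAG:
   it admits a topological ranking. *)
Definition is_dag (K : nat) (par : rel 'I_K) : Prop :=
  exists rank : 'I_K -> nat, forall j k, par j k -> (rank j < rank k)%N.

(* Mstruct k a m = M_k(a, Pa{M_k}) : the structural potential value of M_k when
   A = a and the other mediators are set to m; it may only depend on the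
   values m j of the parents j of k. *)
Definition depends_on_parents (K : nat) (par : rel 'I_K)
  (Mstruct : 'I_K -> bool -> {ffun 'I_K -> bool} -> bool) : Prop :=
  forall k a (m m' : {ffun 'I_K -> bool}),
    (forall j, par j k -> m j = m' j) -> Mstruct k a m = Mstruct k a m'.

(* Potential mediator values M_k(a), defined recursively along the DAG:
   M_k(a) = M_k(a, Pa{M_k}(a)).  For a DAG on K nodes, K rounds of
   propagation reach the unique solution of these recursive equations. *)
Definition Mpot (K : nat) (Mstruct : 'I_K -> bool -> {ffun 'I_K -> bool} -> bool)
  (a : bool) : {ffun 'I_K -> bool} :=
  iter K (fun m => [ffun k => Mstruct k a m]) [ffun => false].

Definition Ypot (R : numDomainType) (K : nat)
  (Mstruct : 'I_K -> bool -> {ffun 'I_K -> bool} -> bool)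
  (Y : bool -> {ffun 'I_K -> bool} -> R) (a : bool) : R :=
  Y a (Mpot Mstruct a).

Definition Yk (R : numDomainType) (K : nat)
  (Mstruct : 'I_K -> bool -> {ffun 'I_K -> bool} -> bool)
  (Y : bool -> {ffun 'I_K -> bool} -> R) (k : 'I_K) (a m : bool) : R :=
  Y a [ffun j => if j == k then m else Mpot Mstruct a j].

Definition TE (R : numDomainType) K Mstruct (Y : bool -> {ffun 'I_K -> bool} -> R) : R :=
  Ypot Mstruct Y true - Ypot Mstruct Y false.

Definition CDE0 (R : numDomainType) K Mstruct (Y : bool -> {ffun 'I_K -> bool} -> R)
  (k : 'I_K) : R :=
  Yk Mstruct Y k true false - Yk Mstruct Y k false false.

Definition CIE (R : numDomainType) K Mstruct (Y : bool -> {ffun 'I_K -> bool} -> R)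
  (k : 'I_K) (a : bool) : R :=
  Yk Mstruct Y k a true - Yk Mstruct Y k a false.

Definition sCIE (R : numDomainType) K Mstruct (Y : bool -> {ffun 'I_K -> bool} -> R)
  (k : 'I_K) : R :=
  (Mpot Mstruct true k)%:R * CIE Mstruct Y k true
  - (Mpot Mstruct false k)%:R * CIE Mstruct Y k false.

From mathcomp Require Import all_boot all_order all_algebra.
From mathcomp Require Import reals.
Import Order.TTheory GRing.Theory Num.Theory.
Local Open Scope ring_scope.

(* A function of one binary argument is affine in it:
   Y_k(a, m) = Y_k(a, 0) + m CIE_k(a).  Taking m = M_k(a) turns Y_k(a, M_k(a))
   = Y(a) into Y_k(a, 0) + M_k(a) CIE_k(a), and subtracting the case a = 0
   from a = 1 gives the decomposition.  The identity is purely algebraic: it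
   holds for any mediator values, so the graph structure plays no role. *)

Lemma bool_affine {R : pzRingType} (g : bool -> R) (b : bool) :
  g b = g false + b%:R * (g true - g false).
Proof. by case: b; rewrite ?mul1r ?mul0r ?addr0 // addrC subrK. Qed.

Lemma Yk_Mpot {R : numDomainType} {K : nat}
    (Mstruct : 'I_K -> bool -> {ffun 'I_K -> bool} -> bool)
    (Y : bool -> {ffun 'I_K -> bool} -> R) (k : 'I_K) (a : bool) :
  Yk Mstruct Y k a (Mpot Mstruct a k) = Ypot Mstruct Y a.
Proof.
rewrite /Yk /Ypot; congr (Y a); apply/ffunP => j; rewrite ffunE.
by case: eqP => // ->.
Qed.

Theorem mainTheorem1 (R : realType) (K : nat) (hK : (0 < K)%N)
  (par : rel 'I_K) (hdag : is_dag par)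
  (Mstruct : 'I_K -> bool -> {ffun 'I_K -> bool} -> bool)
  (hpa : depends_on_parents par Mstruct)
  (Y : bool -> {ffun 'I_K -> bool} -> R) :
  forall k : 'I_K, TE Mstruct Y = CDE0 Mstruct Y k + sCIE Mstruct Y k.
Proof.
move=> k; rewrite /TE -!(Yk_Mpot Mstruct Y k).
rewrite (bool_affine (Yk Mstruct Y k true)) (bool_affine (Yk Mstruct Y k false)).
by rewrite /CDE0 /sCIE /CIE opprD addrACA.
Qed.
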